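(* For every positive integer $n$ there exists a word of length $n$ over an alphabet of size $O(\log n)$ that has at least $2^{\lfloor (n+1)/16\rfloor}$ different shortest s-covers.
   Context: For words $C,S$, $C$ is an \emph{s-cover} of $S$ if for every position $i$ of $S$ there exist indices $j_0<\dots<j_{|C|-1}$ with $S[j_t]=C[t]$ for all $t$ and $i\in\{j_0,\dots,j_{|C|-1}\}$. A shortest s-cover of $S$ is an s-cover of $S$ of minimum length. *)

From mathcomp Require Export all_boot.
Set Implicit Arguments. Unset Strict Implicit. Unset Printing Implicit Defensive.

(* An occurrence of C in S is given by a selection mask m of S (positions
   j_0 < ... < j_{|C|-1} are exactly the positions where m is true). *)
Definition is_scover (C S : seq nat) : Prop :=
  forall i, i < size S ->
    exists m : bitseq, [/\ size m = size S, mask m S = C & nth false m i].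

Definition is_shortest_scover (C S : seq nat) : Prop :=
  is_scover C S /\ forall C', is_scover C' S -> size C <= size C'.

Definition alphabet_size (S : seq nat) : nat := size (undup S).

From mathcomp Require Import all_boot.
From mathcomp Require Import zify.

Set Implicit Arguments.
Unset Strict Implicit.

(* The word [0;1;0;1;2;0;3;2;3;2] of length 10 has the two shortest
   s-covers [0;1;0;2;3;2] and [0;1;2;0;3;2]. If a letter x occurs in neither
   A nor B, the shortest s-covers of A ++ x :: B are exactly the words
   C1 ++ x :: C2 with C1, C2 shortest s-covers of A and B, so their numbers
   multiply. Chaining t copies of the gadget along a balanced binary tree of
   separators needs only O(log t) separator letters and gives 2^t shortest
   s-covers for a word of length 11 t - 1; fresh letters pad it to length n. *)

(* The [subseq] conjunct only matters for the empty word, of which every word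
   is vacuously an s-cover. *)
Definition scover (C S : seq nat) := subseq C S /\ is_scover C S.

Definition shortest_scover (C S : seq nat) :=
  scover C S /\ forall C', scover C' S -> size C <= size C'.

Lemma shortest_scover_is_shortest C S :
  shortest_scover C S -> is_shortest_scover C S.
Proof.
move=> [[subC covC] minC]; split=> // C' covC'.
case: S subC covC minC covC' => [|a S] subC _ minC covC'.
  by move: subC; rewrite subseq0 => /eqP ->.
apply: minC; split=> //.
have [m [_ <- _]] := covC' 0 (ltn0Sn _).
exact: mask_subseq.
Qed.

Lemma cat_fresh_inj {x : nat} {P Q P' Q' : seq nat} : x \notin P -> x \notin P' ->
  P ++ x :: Q = P' ++ x :: Q' -> P = P' /\ Q = Q'.
Proof.
move=> xP xP' e.
have eP : P = P'.
  have ei : index x (P ++ x :: Q) = index x (P' ++ x :: Q') by rewrite e.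
  rewrite !index_cat (negPf xP) (negPf xP') /= eqxx !addn0 in ei.
  by rewrite -(take_size_cat (x :: Q) (erefl (size P))) e ei take_size_cat.
by move: e; rewrite eP => /eqP; rewrite eqseq_cat // => /andP[_ /eqP[]].
Qed.

Section FreshSeparator.

Variables (x : nat) (A B : seq nat).
Hypotheses (xA : x \notin A) (xB : x \notin B).

Lemma split_mask (m : bitseq) : size m = size (A ++ x :: B) ->
  exists m1 b m2, [/\ m = m1 ++ b :: m2, size m1 = size A & size m2 = size B].
Proof.
move=> sm; have hA : size A < size m by rewrite sm size_cat /= addnS ltnS leq_addr.
exists (take (size A) m), (nth false m (size A)), (drop (size A).+1 m); split.
- by rewrite -drop_nth ?cat_take_drop.
- by rewrite size_take hA.
- by rewrite size_drop sm size_cat /= addnS subSS addKn.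
Qed.

(* The separator is the only x available to match the first x of the word. *)
Lemma mask_fresh_split (m : bitseq) C1 C2 : x \notin C1 ->
  size m = size (A ++ x :: B) -> mask m (A ++ x :: B) = C1 ++ x :: C2 ->
  exists m1 m2, [/\ m = m1 ++ true :: m2, size m1 = size A, size m2 = size B,
                    mask m1 A = C1 & mask m2 B = C2].
Proof.
move=> xC1 /split_mask[m1 [b [m2 [-> sm1 sm2]]]].
rewrite mask_cat //; case: b => /= e.
  have xm1 : x \notin mask m1 A by apply: contra xA; apply: mem_mask.
  by have [<- <-] := cat_fresh_inj xm1 xC1 e; exists m1, m2.
have : x \in mask m1 A ++ mask m2 B by rewrite e mem_cat inE eqxx orbT.
by rewrite mem_cat => /orP[] /mem_mask; rewrite ?(negPf xA) ?(negPf xB).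
Qed.

Lemma scover_cat C1 C2 : scover C1 A -> scover C2 B ->
  scover (C1 ++ x :: C2) (A ++ x :: B).
Proof.
move=> [s1 c1] [s2 c2]; split; first by apply: cat_subseq => //=; rewrite eqxx.
have /subseqP[m1 sm1 e1] := s1; have /subseqP[m2 sm2 e2] := s2.
move=> i; rewrite size_cat /= => hi.
case: (ltngtP i (size A)) => hiA.
- have [m [sm em nm]] := c1 i hiA.
  exists (m ++ true :: m2).
  by rewrite !size_cat /= sm sm2 mask_cat //= em e2 nth_cat sm hiA.
- have [|m [sm em nm]] := c2 (i - (size A).+1); first by lia.
  exists (m1 ++ true :: m).
  rewrite !size_cat /= sm sm1 mask_cat //= em e1 nth_cat sm1.
  by rewrite ltnNge (ltnW hiA) -subnSK.
- exists (m1 ++ true :: m2).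
  by rewrite !size_cat /= sm1 sm2 mask_cat //= e1 e2 nth_cat sm1 hiA ltnn subnn.
Qed.

Lemma scover_split C : scover C (A ++ x :: B) ->
  exists C1 C2, [/\ C = C1 ++ x :: C2, scover C1 A & scover C2 B].
Proof.
move=> [sC cC].
have [|m [sm em nm]] := cC (size A); first by rewrite size_cat /= addnS ltnS leq_addr.
have [m1 [b [m2 [mE sm1 _]]]] := split_mask sm.
rewrite mE nth_cat sm1 ltnn subnn /= in nm.
rewrite mE nm mask_cat //= in em; subst C.
have xC1 : x \notin mask m1 A by apply: contra xA; apply: mem_mask.
exists (mask m1 A), (mask m2 B); split=> //; split; try exact: mask_subseq.
- move=> i hi; have [|m' [sm' em' nm']] := cC i; first by rewrite size_cat ltn_addr.
  have [m1' [m2' [e' sm1' _ <- _]]] := mask_fresh_split xC1 sm' em'.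
  by exists m1'; rewrite e' nth_cat sm1' hi in nm'.
- move=> i hi; have [|m' [sm' em' nm']] := cC (size A + i.+1).
    by rewrite size_cat /= ltn_add2l.
  have [m1' [m2' [e' sm1' sm2' _ <-]]] := mask_fresh_split xC1 sm' em'.
  by exists m2'; rewrite e' nth_cat sm1' ltnNge leq_addr /= addKn in nm'.
Qed.

End FreshSeparator.

Definition many_shortest_scovers (S : seq nat) (k : nat) :=
  exists L : seq (seq nat),
    [/\ uniq L, forall C, C \in L -> shortest_scover C S & k <= size L].

Lemma many_shortest_scovers_cat x A B k1 k2 : x \notin A -> x \notin B ->
  many_shortest_scovers A k1 -> many_shortest_scovers B k2 ->
  many_shortest_scovers (A ++ x :: B) (k1 * k2).
Proof.
move=> xA xB [L1 [u1 h1 s1]] [L2 [u2 h2 s2]].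
have xL1 C : C \in L1 -> x \notin C.
  by move=> /h1[[/mem_subseq sub _] _]; apply: contra xA; apply: sub.
exists [seq C1 ++ x :: C2 | C1 <- L1, C2 <- L2]; split.
- apply: allpairs_uniq => // [[C1 C2] [C1' C2']] /allpairsP[[D1 D2] /= [hD1 _ [-> ->]]].
  move=> /allpairsP[[D1' D2'] /= [hD1' _ [-> ->]]] /=.
  by move/(cat_fresh_inj (xL1 _ hD1) (xL1 _ hD1')) => [-> ->].
- move=> C /allpairsP[[C1 C2] /= [hC1 hC2 ->]].
  have [cov1 min1] := h1 _ hC1; have [cov2 min2] := h2 _ hC2.
  split; first exact: scover_cat.
  move=> C' /(scover_split xA xB)[D1 [D2 [-> /min1 le1 /min2 le2]]].
  by rewrite !size_cat /= !addnS ltnS leq_add.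
- by rewrite size_allpairs leq_mul.
Qed.

Lemma many_shortest_scovers_nil : many_shortest_scovers [::] 1.
Proof. by exists [:: [::]]; split=> // C; rewrite inE => /eqP ->. Qed.

Lemma many_shortest_scovers_rcons x A k : x \notin A ->
  many_shortest_scovers A k -> many_shortest_scovers (rcons A x) k.
Proof.
move=> xA hA; rewrite -cats1 -(muln1 k).
exact: many_shortest_scovers_cat xA _ hA many_shortest_scovers_nil.
Qed.

Fixpoint bitseqs n : seq bitseq :=
  if n is n'.+1 then [seq b :: m | b <- [:: true; false], m <- bitseqs n']
  else [:: [::]].

Lemma mem_bitseqs n m : (m \in bitseqs n) = (size m == n).
Proof.
elim: n m => [|n IH] m; first by case: m.
apply/allpairsP/eqP => [[[b m'] [_ /= + ->]]|]; first by rewrite IH => /eqP <-.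
case: m => // b m [sm]; exists (b, m); rewrite /= IH sm; split=> //.
by case: b.
Qed.

Fixpoint occurrences (C S : seq nat) {struct S} : seq bitseq :=
  if S is s :: S' then
    (if C is c :: C' then
       if c == s then map (cons true) (occurrences C' S') else [::]
     else [::]) ++ map (cons false) (occurrences C S')
  else if C is [::] then [:: [::]] else [::].

Lemma mem_map_cons (b b' : bool) m (ms : seq bitseq) :
  (b :: m \in map (cons b') ms) = (b == b') && (m \in ms).
Proof.
apply/mapP/andP => [[m' mm' [-> ->]]|[/eqP -> mm]]; last by exists m.
by rewrite eqxx.
Qed.

Lemma mem_occurrences C S m :
  (m \in occurrences C S) = (size m == size S) && (mask m S == C).
Proof.
elim: S C m => [|s S IH] C [|b m] /=; try by case: C.
  have nil_notin b (ms : seq bitseq) : [::] \notin map (cons b) ms.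
    by apply/mapP => -[].
  rewrite mem_cat (negPf (nil_notin _ _)) orbF.
  by case: C => [|c C] //; case: eqP => // _; exact: negPf (nil_notin _ _).
rewrite mem_cat !mem_map_cons IH eqSS; case: b => /=.
  rewrite orbF; case: C => [|c C] /=; first by rewrite andbF.
  case: (eqVneq c s) => [->|ne] /=; first by rewrite mem_map_cons IH eqseq_cons !eqxx.
  by rewrite eqseq_cons (eq_sym s) (negPf ne) andbF.
by case: C => [|c C] //=; case: eqP => _ //; rewrite mem_map_cons.
Qed.

Definition scoverb (C S : seq nat) :=
  all (fun i => has (nth false ^~ i) (occurrences C S)) (iota 0 (size S)).

Lemma scoverP C S : reflect (is_scover C S) (scoverb C S).
Proof.
apply: (iffP allP) => [h i hi | h i].
  have /h/hasP[m + nm] : i \in iota 0 (size S) by rewrite mem_iota.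
  by rewrite mem_occurrences => /andP[/eqP sm /eqP em]; exists m.
rewrite mem_iota add0n => /andP[_ /h[m [sm em nm]]].
by apply/hasP; exists m; rewrite // mem_occurrences sm em !eqxx.
Qed.

Definition gadget : seq nat := [:: 0; 1; 0; 1; 2; 0; 3; 2; 3; 2].

Lemma gadget_scover_size C : scover C gadget -> 6 <= size C.
Proof.
move=> [/subseqP[m sm ->] /scoverP cov].
have all_masks : all (fun m => (6 <= size (mask m gadget))
                               || ~~ scoverb (mask m gadget) gadget)
                     (bitseqs (size gadget)) by vm_compute.
by have := allP all_masks m; rewrite mem_bitseqs sm eqxx cov orbF; apply.
Qed.

Lemma gadget_shortest_scovers : many_shortest_scovers gadget 2.
Proof.
exists [:: [:: 0; 1; 0; 2; 3; 2]; [:: 0; 1; 2; 0; 3; 2]]; split=> // C.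
rewrite !inE => /orP[] /eqP ->; split=> [|C' /gadget_scover_size //];
  by split; [| apply/scoverP; vm_compute].
Qed.

Lemma all_ltn_notin b (s : seq nat) : all (fun a => a < b) s -> b \notin s.
Proof. by move=> /allP h; apply/negP => /h; rewrite ltnn. Qed.

(* For t <= 2 ^ d: t copies of the gadget, separated along a balanced binary
   tree by the letters 4, ..., 3 + d. *)
Fixpoint gadgets d t : seq nat :=
  if d is d'.+1 then
    if t <= 2 ^ d' then gadgets d' t
    else gadgets d' (2 ^ d') ++ (4 + d') :: gadgets d' (t - 2 ^ d')
  else if t is 0 then [::] else gadget.

Lemma gadgets_ltn d t : all (fun a => a < 4 + d) (gadgets d t).
Proof.
elim: d t => [|d IH] t /=; first by case: t.
have wk t' : all (fun a => a < 4 + d.+1) (gadgets d t').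
  by apply: sub_all (IH t') => a /=; lia.
by case: ifP => _; rewrite ?all_cat /= ?wk //= andbT; lia.
Qed.

Lemma size_gadgets d t : t <= 2 ^ d -> size (gadgets d t) = 11 * t - 1.
Proof.
elim: d t => [|d IH] t /=; first by case: t => [|[|]].
rewrite expnS; case: ifP => [le _|/negbT]; first exact: IH.
rewrite -ltnNge => gt le2; rewrite size_cat /= IH // IH; last by lia.
by have := expn_gt0 2 d; lia.
Qed.

Lemma gadgets_shortest_scovers d t : t <= 2 ^ d ->
  many_shortest_scovers (gadgets d t) (2 ^ t).
Proof.
elim: d t => [|d IH] t /=.
  case: t => [|[|]] // _.
    exact: many_shortest_scovers_nil.
  exact: gadget_shortest_scovers.
rewrite expnS; case: ifP => [le _|/negbT]; first exact: IH.
rewrite -ltnNge => gt le2.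
have -> : 2 ^ t = 2 ^ (2 ^ d) * 2 ^ (t - 2 ^ d) by rewrite -expnD subnKC // ltnW.
apply: many_shortest_scovers_cat; try apply: all_ltn_notin (gadgets_ltn _ _).
  exact: IH.
by apply: IH; lia.
Qed.

Lemma many_shortest_scovers_pad b s k0 k : all (fun a => a < b) s ->
  many_shortest_scovers s k0 -> many_shortest_scovers (s ++ iota b k) k0.
Proof.
move=> hs h; elim: k => [|k IH]; first by rewrite cats0.
rewrite -addn1 iotaD catA cats1; apply: many_shortest_scovers_rcons IH.
apply: all_ltn_notin; rewrite all_cat; apply/andP; split.
  by apply: sub_all hs => a /=; lia.
by apply/allP => a; rewrite mem_iota /=; lia.
Qed.

Theorem mainTheorem17 :
  exists c : nat, forall n : nat, 0 < n ->
    exists S : seq nat,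
      [/\ size S = n,
          alphabet_size S <= c * (trunc_log 2 n).+1 &
          exists L : seq (seq nat),
            [/\ uniq L,
                forall C, C \in L -> is_shortest_scover C S &
                2 ^ ((n + 1) %/ 16) <= size L]].
Proof.
exists 14 => n n0.
set D := trunc_log 2 n; set t := (n + 1) %/ 11.
have le_t : t <= 2 ^ D.
  by have := trunc_log_ltn n (isT : 1 < 2); rewrite -/D expnS /t; lia.
have size_w := size_gadgets le_t.
set w := gadgets D t; set k := n - size w.
exists (w ++ iota (4 + D) k); split.
- by rewrite size_cat size_iota /k size_w /t; lia.
- apply: leq_trans (_ : size (iota 0 (4 + D + k)) <= _); last first.
    by rewrite size_iota /k size_w /t; lia.
  apply: uniq_leq_size (undup_uniq _) _ => a.
  rewrite mem_undup mem_cat !mem_iota => /orP[/(allP (gadgets_ltn D t))|]; lia.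
- have [L [uL hL sL]] :=
    many_shortest_scovers_pad k (gadgets_ltn D t) (gadgets_shortest_scovers le_t).
  exists L; split=> // [C /hL/shortest_scover_is_shortest //|].
  by apply: leq_trans sL; rewrite leq_exp2l // /t; lia.
Qed.
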